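(* Let $\mathcal A\subseteq\mathcal B(H)$ be a von Neumann algebra, $\xi\in H$, and let $\epsilon_A\in\mathcal A$ be the support projection of $\omega_\xi|_{\mathcal A}$. Suppose that for every self-adjoint $a\in\mathcal A$ and every $\epsilon>0$ there exists $\hat a\in\mathcal A'$ with $\|a\xi-\hat a\xi\|<\epsilon$. Then $\epsilon_A a=a\epsilon_A$ for every $a\in\mathcal A$, i.e. $\epsilon_A$ is central in $\mathcal A$.
   Context: $\omega_\xi(x)=\langle x\xi,\xi\rangle$. The support of a normal positive functional $\omega$ on a von Neumann algebra $\mathcal M$ is the smallest projection $p\in\mathcal M$ with $\omega(x)=\omega(pxp)$ for all $x\in\mathcal M$. *)

From HB Require Import structures.
From mathcomp Require Import all_boot all_order all_algebra.
From mathcomp Require Import reals.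
From mathcomp Require Import complex.
Set Implicit Arguments. Unset Strict Implicit. Unset Printing Implicit Defensive.
Import Order.TTheory GRing.Theory Num.Theory.
Local Open Scope ring_scope.

Section Hilbert.
Variable R : realType.
Local Notation C := R[i].
Variable V : lmodType C.
Variable ip : V -> V -> C.   (* inner product, linear in the 1st argument *)

Definition hnorm (x : V) : R := Num.sqrt (complex.Re (ip x x)).

Definition is_hilbert : Prop :=
  [/\ (forall (a : C) (x y z : V), ip (a *: x + y) z = a * ip x z + ip y z),
      (forall x y : V, ip y x = Num.conj (ip x y)),
      (forall x : V, 0 <= ip x x),
      (forall x : V, ip x x = 0 -> x = 0) &
      (forall u : nat -> V,
         (forall e : R, 0 < e -> exists N : nat, forall m n : nat,
              (N <= m)%N -> (N <= n)%N -> hnorm (u m - u n) < e) ->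
         exists l : V, forall e : R, 0 < e -> exists N : nat, forall n : nat,
              (N <= n)%N -> hnorm (u n - l) < e)].

Definition bounded_op (T : V -> V) : Prop :=
  (forall (a : C) (x y : V), T (a *: x + y) = a *: T x + T y) /\
  exists M : R, forall x : V, hnorm (T x) <= M * hnorm x.

Definition is_adjoint (T S : V -> V) : Prop :=
  forall x y : V, ip (T x) y = ip x (S y).

Definition self_adjoint (T : V -> V) : Prop := is_adjoint T T.

Definition is_projection (P : V -> V) : Prop :=
  bounded_op P /\ P \o P =1 P /\ self_adjoint P.

Definition proj_le (P Q : V -> V) : Prop := forall x, Q (P x) = P x.

Definition commutant (A : (V -> V) -> Prop) : (V -> V) -> Prop :=
  fun T => bounded_op T /\ forall a, A a -> forall x, T (a x) = a (T x).

Definition von_neumann_algebra (A : (V -> V) -> Prop) : Prop :=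
  (forall a, A a -> bounded_op a) /\
  (forall a, A a -> exists b, A b /\ is_adjoint a b) /\
  (forall T, A T <-> commutant (commutant A) T).

Definition omega (xi : V) (T : V -> V) : C := ip (T xi) xi.

Definition is_support (A : (V -> V) -> Prop) (xi : V) (P : V -> V) : Prop :=
  [/\ A P, is_projection P,
      (forall x, A x -> omega xi x = omega xi (P \o x \o P)) &
      (forall Q, A Q -> is_projection Q ->
         (forall x, A x -> omega xi x = omega xi (Q \o x \o Q)) -> proj_le P Q)].
End Hilbert.

From HB Require Import structures.
From mathcomp Require Import all_boot all_order all_algebra.
From mathcomp Require Import boolp classical_sets reals.
From mathcomp Require Import complex.
From mathcomp Require Import ring lra.
(* Let [b] be the adjoint of [a], [c := (1 - p) a p] and [d := p b (1 - p)], so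
   that [d] is the adjoint of [c] and both lie in [A].  The approximation
   hypothesis puts every [a xi] in the range of [p], so [c xi = 0] and [xi] is
   orthogonal to the range of [d].  The orthogonal projection [P] onto the closed
   range of [d] commutes with [A'] (its orthogonal complement is the kernel of
   [c]), so [1 - P] is a projection of [A] fixing [xi].  Minimality of the
   support gives [p <= 1 - P]; as the range of [d] lies under [p], [d = 0], hence
   [c = 0]: [p] is invariant under [A].  Applied to [b] as well, this yields
   [p a = a p]. *)

Set Implicit Arguments. Unset Strict Implicit. Unset Printing Implicit Defensive.
Import Order.TTheory GRing.Theory Num.Theory.
Local Open Scope complex_scope.
Local Open Scope ring_scope.

Lemma inv_succ_lt (R : archiFieldType) (e : R) : 0 < e ->
  exists K, forall m, (K <= m)%N -> m.+1%:R^-1 < e.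
Proof.
move=> e0; exists (Num.Def.archi_bound e^-1) => m hm.
rewrite invf_plt ?posrE ?ltr0n //.
apply: (lt_le_trans (archi_boundP _)); first by rewrite invr_ge0 ltW.
by rewrite ler_nat (leq_trans hm).
Qed.

(** * Inner product spaces *)

Lemma conjCD (C : numClosedFieldType) (a b : C) : (a + b)^* = a^* + b^*.
Proof. exact: rmorphD. Qed.

Lemma conjCM (C : numClosedFieldType) (a b : C) : (a * b)^* = a^* * b^*.
Proof. exact: rmorphM. Qed.

Lemma conjC_real (R : rcfType) (k : R) : (k%:C)^* = k%:C.
Proof. exact: conjc_real. Qed.

Section Hilbert.
Variable R : realType.
Local Notation C := R[i].
Variable V : lmodType C.
Variable ip : V -> V -> C.
Hypothesis HH : is_hilbert ip.

Lemma ipDZl a x y z : ip (a *: x + y) z = a * ip x z + ip y z.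
Proof. by case: HH => + _ _ _ _; apply. Qed.

Lemma ipC x y : ip y x = (ip x y)^*.
Proof. by case: HH => _ + _ _ _; apply. Qed.

Lemma ipxx_ge0 x : 0 <= ip x x.
Proof. by case: HH => _ _ + _ _; apply. Qed.

Lemma ipxx_eq0 x : ip x x = 0 -> x = 0.
Proof. by case: HH => _ _ _ + _; apply. Qed.

Lemma ipDl x y z : ip (x + y) z = ip x z + ip y z.
Proof. by rewrite -[x]scale1r ipDZl mul1r scale1r. Qed.

Lemma ip0l z : ip 0 z = 0.
Proof. by apply: (@addrI _ (ip 0 z)); rewrite -ipDl !addr0. Qed.

Lemma ipZl a x z : ip (a *: x) z = a * ip x z.
Proof. by rewrite -[a *: x]addr0 ipDZl ip0l addr0. Qed.

Lemma ipNl x z : ip (- x) z = - ip x z.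
Proof. by rewrite -scaleN1r ipZl mulN1r. Qed.

Lemma ipBl x y z : ip (x - y) z = ip x z - ip y z.
Proof. by rewrite ipDl ipNl. Qed.

Lemma ipDr x y z : ip z (x + y) = ip z x + ip z y.
Proof. by rewrite ipC ipDl conjCD -!ipC. Qed.

Lemma ipZr a x z : ip z (a *: x) = a^* * ip z x.
Proof. by rewrite ipC ipZl conjCM -ipC. Qed.

Lemma ip0r z : ip z 0 = 0.
Proof. by rewrite ipC ip0l conjC0. Qed.

Lemma ipNr x z : ip z (- x) = - ip z x.
Proof. by rewrite -scaleN1r ipZr conjCN1 mulN1r. Qed.

Lemma ipBr x y z : ip z (x - y) = ip z x - ip z y.
Proof. by rewrite ipDr ipNr. Qed.

Definition sqnorm (x : V) : R := complex.Re (ip x x).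

Lemma ipxxE x : ip x x = (sqnorm x)%:C.
Proof. by rewrite /sqnorm RRe_real // ger0_real // ipxx_ge0. Qed.

Lemma sqnorm_ge0 x : 0 <= sqnorm x.
Proof. by rewrite -ler0c -ipxxE ipxx_ge0. Qed.

Lemma sqnorm_eq0 x : sqnorm x = 0 -> x = 0.
Proof. by move=> h; apply: ipxx_eq0; rewrite ipxxE h. Qed.

Lemma sqnorm_le0 x : sqnorm x <= 0 -> x = 0.
Proof. by move=> h; apply: sqnorm_eq0; apply/eqP; rewrite eq_le h sqnorm_ge0. Qed.

Lemma sqnorm0 : sqnorm 0 = 0.
Proof. by rewrite /sqnorm ip0l. Qed.

Lemma sqnormD x y : sqnorm (x + y) = sqnorm x + sqnorm y + 2 * complex.Re (ip x y).
Proof.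
rewrite /sqnorm ipDl !ipDr [ip y x]ipC.
case: (ip x x) (ip x y) (ip y y) => [? ?] [? ?] [? ?] /=; lra.
Qed.

Lemma sqnormN x : sqnorm (- x) = sqnorm x.
Proof. by rewrite /sqnorm ipNl ipNr opprK. Qed.

Lemma sqnormB x y : sqnorm (x - y) = sqnorm x + sqnorm y - 2 * complex.Re (ip x y).
Proof.
rewrite sqnormD sqnormN ipNr.
by case: (ip x y) => [? ?] /=; lra.
Qed.

Lemma sqnormZ (c : C) x : sqnorm (c *: x) = complex.Re (c * c^*) * sqnorm x.
Proof.
rewrite /sqnorm ipZl ipZr mulrA ipxxE.
by case: (c * c^*) => u w /=; rewrite mulr0 subr0.
Qed.

Lemma sqnormZr (k : R) x : sqnorm (k%:C *: x) = k ^+ 2 * sqnorm x.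
Proof. by rewrite sqnormZ conjC_real /= mulr0 subr0 expr2. Qed.

Lemma Re_ipC x y : complex.Re (ip y x) = complex.Re (ip x y).
Proof. by rewrite ipC; case: (ip x y). Qed.

Lemma Re_ipZr (k : R) x y : complex.Re (ip x (k%:C *: y)) = k * complex.Re (ip x y).
Proof. by rewrite ipZr conjC_real; case: (ip x y) => ? ? /=; rewrite mul0r subr0. Qed.

Lemma Re_ipZi x y : complex.Re (ip x ('i%C *: y)) = complex.Im (ip x y).
Proof. by rewrite ipZr; case: (ip x y) => u v /=; lra. Qed.

Lemma young_ip (t : R) a b :
  2 * t * complex.Re (ip a b) <= t ^+ 2 * sqnorm a + sqnorm b.
Proof.
have := sqnorm_ge0 (t%:C *: a - b).
rewrite sqnormB sqnormZr ipZl; case: (ip a b) => ? ? /=; lra.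
Qed.

Lemma sqnormD_le a b : sqnorm (a + b) <= 2 * sqnorm a + 2 * sqnorm b.
Proof. by have := young_ip 1 a b; rewrite sqnormD; lra. Qed.

Lemma Re_ip_sqr_le a b : complex.Re (ip a b) ^+ 2 <= sqnorm a * sqnorm b.
Proof.
have [a0|a0] := eqVneq (sqnorm a) 0.
  by rewrite (sqnorm_eq0 a0) ip0l /= expr2 mul0r sqnorm0 mul0r.
have ap : 0 < sqnorm a by rewrite lt_def a0 sqnorm_ge0.
set r := complex.Re (ip a b); pose s := r / sqnorm a.
have hr : r = s * sqnorm a by rewrite /s divfK.
have := young_ip s a b; rewrite -/r hr; have := sqnorm_ge0 b; nra.
Qed.

Lemma parallelogram_midpoint x v w : sqnorm (v - w) =
  2 * sqnorm (x - v) + 2 * sqnorm (x - w) - 4 * sqnorm (x - (2^-1 : R)%:C *: (v + w)).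
Proof.
have -> : x - (2^-1 : R)%:C *: (v + w) = (2^-1 : R)%:C *: ((x - v) + (x - w)).
  rewrite addrACA -opprD scalerBr [_ *: (x + x)]scalerDr -scalerDl -rmorphD.
  by rewrite -div1r -splitr scale1r.
have -> : v - w = (x - w) - (x - v) by rewrite [RHS]addrC opprB addrA subrK.
move: (x - v) (x - w) => a b.
by rewrite sqnormZr sqnormB sqnormD Re_ipC; field.
Qed.

(** * Bounded operators *)

Lemma hnormE v : hnorm ip v = Num.sqrt (sqnorm v).
Proof. by []. Qed.

Section BoundedOp.
Variable T : V -> V.
Hypothesis hT : bounded_op ip T.

Lemma op_linear a x y : T (a *: x + y) = a *: T x + T y.
Proof. by case: hT => + _; apply. Qed.

Lemma op0 : T 0 = 0.
Proof.
have := op_linear 1 0 0; rewrite !scale1r addr0 => h.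
by apply: (@addrI _ (T 0)); rewrite addr0 -h.
Qed.

Lemma opD x y : T (x + y) = T x + T y.
Proof. by rewrite -[x]scale1r op_linear !scale1r. Qed.

Lemma opZ a x : T (a *: x) = a *: T x.
Proof. by rewrite -[a *: x]addr0 op_linear op0 addr0. Qed.

Lemma opN x : T (- x) = - T x.
Proof. by rewrite -scaleN1r opZ scaleN1r. Qed.

Lemma opB x y : T (x - y) = T x - T y.
Proof. by rewrite opD opN. Qed.

Lemma op_sqnorm_le : exists2 K, 0 <= K & forall v, sqnorm (T v) <= K * sqnorm v.
Proof.
case: hT => _ [M hM]; exists (M ^+ 2) => [|v]; first exact: sqr_ge0.
have h0 : 0 <= hnorm ip (T v) := sqrtr_ge0 _.
have : hnorm ip (T v) ^+ 2 <= (M * hnorm ip v) ^+ 2.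
  by rewrite ler_sqr ?nnegrE ?(le_trans h0) ?hM.
by rewrite !hnormE exprMn !sqr_sqrtr ?sqnorm_ge0.
Qed.
End BoundedOp.

Lemma bounded_op_of_sqnorm (T : V -> V) (K : R) :
  (forall a x y, T (a *: x + y) = a *: T x + T y) -> 0 <= K ->
  (forall v, sqnorm (T v) <= K * sqnorm v) -> bounded_op ip T.
Proof.
move=> lin K0 hK; split=> //; exists (Num.sqrt K) => v.
by rewrite !hnormE -sqrtrM // ler_sqrt ?mulr_ge0 ?sqnorm_ge0.
Qed.

Lemma bounded_op_id : bounded_op ip id.
Proof. by apply: (@bounded_op_of_sqnorm _ 1) => // v; rewrite mul1r. Qed.

Lemma bounded_op_comp f g : bounded_op ip f -> bounded_op ip g ->
  bounded_op ip (fun x => f (g x)).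
Proof.
move=> hf hg; have [Kf Kf0 hKf] := op_sqnorm_le hf; have [Kg Kg0 hKg] := op_sqnorm_le hg.
apply: (@bounded_op_of_sqnorm _ (Kf * Kg)) => [a x y||v].
- by rewrite (op_linear hg) (op_linear hf).
- exact: mulr_ge0.
- by rewrite -mulrA; apply: le_trans (hKf _) _; rewrite ler_wpM2l.
Qed.

Lemma bounded_op_scale (c : C) f : bounded_op ip f -> bounded_op ip (fun x => c *: f x).
Proof.
move=> hf; have [K K0 hK] := op_sqnorm_le hf.
have c0 : 0 <= complex.Re (c * c^*) by have := mul_conjC_ge0 c; rewrite lecE => /andP[].
apply: (@bounded_op_of_sqnorm _ (complex.Re (c * c^*) * K)) => [a x y||v].
- by rewrite (op_linear hf) scalerDr !scalerA mulrC.
- exact: mulr_ge0.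
- by rewrite sqnormZ -mulrA ler_wpM2l.
Qed.

Lemma bounded_op_add f g : bounded_op ip f -> bounded_op ip g ->
  bounded_op ip (fun x => f x + g x).
Proof.
move=> hf hg; have [Kf Kf0 hKf] := op_sqnorm_le hf; have [Kg Kg0 hKg] := op_sqnorm_le hg.
apply: (@bounded_op_of_sqnorm _ (2 * Kf + 2 * Kg)) => [a x y||v].
- by rewrite (op_linear hf) (op_linear hg) scalerDr addrACA.
- by rewrite addr_ge0 ?mulr_ge0.
- apply: le_trans (sqnormD_le _ _) _; have := hKf v; have := hKg v; nra.
Qed.

Lemma bounded_op_sub f g : bounded_op ip f -> bounded_op ip g ->
  bounded_op ip (fun x => f x - g x).
Proof.
move=> hf hg; have := bounded_op_add hf (bounded_op_scale (-1) hg).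
by congr bounded_op; apply: funext => x; rewrite scaleN1r.
Qed.

(** * Completeness and the projection theorem *)

Lemma hnorm_lt_sqrt v (e : R) : 0 < e -> (hnorm ip v < Num.sqrt e) = (sqnorm v < e).
Proof. exact: ltr_sqrt. Qed.

Lemma sqnorm_complete (u : nat -> V) :
  (forall e, 0 < e -> exists K, forall m n, (K <= m)%N -> (K <= n)%N ->
     sqnorm (u m - u n) < e) ->
  exists l, forall e, 0 < e -> exists K, forall n, (K <= n)%N -> sqnorm (u n - l) < e.
Proof.
move=> hu; case: HH => _ _ _ _ /(_ u) [e e0|l hl].
  have [K hK] := hu _ (exprn_gt0 2 e0); exists K => m n hm hn.
  by rewrite -[e]gtr0_norm // -sqrtr_sqr hnorm_lt_sqrt ?exprn_gt0 ?hK.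
exists l => e e0.
have [K hK] : exists K, forall n, (K <= n)%N -> hnorm ip (u n - l) < Num.sqrt e.
  by apply: hl; rewrite sqrtr_gt0.
by exists K => n hn; rewrite -hnorm_lt_sqrt ?hK.
Qed.

Lemma sqnorm_le_sqnormD a (e : R) : 0 < e ->
  exists2 d, 0 < d & forall b, sqnorm b < d -> sqnorm a <= sqnorm (a + b) + e.
Proof.
move=> e0; have a1 : 0 < sqnorm a + 1 by have := sqnorm_ge0 a; lra.
exists ((e / 2) ^+ 2 / (sqnorm a + 1)); first by rewrite divr_gt0 ?exprn_gt0 ?divr_gt0.
move=> b hb; rewrite ltr_pdivlMr // in hb.
have cs := Re_ip_sqr_le a b.
have [a0 b0] := (sqnorm_ge0 a, sqnorm_ge0 b).
have r2 : complex.Re (ip a b) ^+ 2 <= (e / 2) ^+ 2.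
  apply: (le_trans cs); apply: ltW; apply: le_lt_trans hb.
  by rewrite mulrDr mulr1 mulrC lerDl.
have : `|complex.Re (ip a b)| <= e / 2.
  by rewrite -ler_sqr ?nnegrE ?real_normK ?num_real // divr_ge0 // ltW.
rewrite sqnormD ler_norml => /andP[? _]; lra.
Qed.

Definition closed_subspace (N : V -> Prop) :=
  [/\ N 0, (forall x y, N x -> N y -> N (x + y)),
      (forall (a : C) x, N x -> N (a *: x)) &
      (forall x, (forall e, 0 < e -> exists2 n, N n & sqnorm (x - n) < e) -> N x)].

Definition orth (N : V -> Prop) (w : V) := forall n, N n -> ip w n = 0.

Section ClosedSubspace.
Variable N : V -> Prop.
Hypothesis hN : closed_subspace N.

Lemma min_dist_Re_orth x m : N m -> (forall n, N n -> sqnorm (x - m) <= sqnorm (x - n)) ->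
  forall n, N n -> complex.Re (ip (x - m) n) = 0.
Proof.
case: hN => _ ND NZ _ Nm hmin n Nn.
set r := complex.Re _; set M := sqnorm n.
have key s : 0 <= s ^+ 2 * M - 2 * s * r.
  have := hmin _ (ND _ _ Nm (NZ s%:C _ Nn)).
  rewrite opprD addrA (sqnormB (x - m)) sqnormZr Re_ipZr; lra.
have M0 : 0 <= M := sqnorm_ge0 n.
pose s := r / (M + 1).
have hr : r = s * (M + 1) by rewrite /s divfK // gt_eqF // ltr_wpDl.
have s0 : s = 0 by have := key s; rewrite hr; nra.
by rewrite hr s0 mul0r.
Qed.

Lemma min_dist_orth x m : N m -> (forall n, N n -> sqnorm (x - m) <= sqnorm (x - n)) ->
  orth N (x - m).
Proof.
move=> Nm hmin n Nn; have [_ _ NZ _] := hN.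
have hre := min_dist_Re_orth Nm hmin Nn.
have him := min_dist_Re_orth Nm hmin (NZ 'i%C _ Nn); rewrite Re_ipZi in him.
by case: (ip _ _) hre him => u v /= -> ->.
Qed.

Lemma min_dist_exists x :
  exists2 m, N m & forall n, N n -> sqnorm (x - m) <= sqnorm (x - n).
Proof.
have [N0 ND NZ Ncl] := hN.
pose eps k : R := k.+1%:R^-1.
have [d d_le near_inf] : exists2 d : R, (forall n, N n -> d <= sqnorm (x - n)) &
    forall k, exists n, N n /\ sqnorm (x - n) < d + eps k.
  pose S : set R := fun r => exists2 n, N n & r = sqnorm (x - n).
  have S0 : (S !=set0)%classic by exists (sqnorm (x - 0)), 0.
  exists (inf S) => [n Nn|k].
    by apply: ge_inf; [exists 0 => _ [? _ ->]; exact: sqnorm_ge0 | exists n].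
  have /(inf_lt S0) [_ [n Nn ->] lt_nd] : inf S < inf S + eps k.
    by rewrite ltrDl invr_gt0 ltr0n.
  by exists n.
have [u hu] := choice near_inf.
(* parallelogram law around the midpoint of two near-minimisers *)
have u_cauchy m n : sqnorm (u m - u n) <= 2 * eps m + 2 * eps n.
  have [[Nm hm] [Nn hn]] := (hu m, hu n).
  have := d_le _ (NZ (2^-1 : R)%:C _ (ND _ _ Nm Nn)).
  rewrite (parallelogram_midpoint x (u m) (u n)); lra.
have [l hl] : exists l, forall e, 0 < e ->
    exists K, forall n, (K <= n)%N -> sqnorm (u n - l) < e.
  apply: sqnorm_complete => e e0.
  have [K hK] := inv_succ_lt (divr_gt0 e0 (ltr0n R 4)).
  exists K => m n /hK hm /hK hn; apply: le_lt_trans (u_cauchy m n) _.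
  rewrite -/(eps m) -/(eps n) in hm hn; lra.
exists l.
  apply: Ncl => e /hl [K hK]; exists (u K); first by case: (hu K).
  by rewrite -sqnormN opprB hK.
move=> n Nn; apply: le_trans (d_le _ Nn); apply/ler_addgt0Pr => e e0.
have [del del0 hdel] := sqnorm_le_sqnormD (x - l) (divr_gt0 e0 (ltr0n R 2)).
have [K1 hK1] := hl _ del0.
have [K2 hK2] := inv_succ_lt (divr_gt0 e0 (ltr0n R 2)).
pose k := maxn K1 K2.
have := hdel (l - u k); rewrite addrA subrK -sqnormN opprB.
move=> /(_ (hK1 k (leq_maxl _ _))).
have := hK2 k (leq_maxr _ _); rewrite -/(eps k); have [_ ?] := hu k; lra.
Qed.

Definition is_orth_proj (P : V -> V) := forall x, N (P x) /\ orth N (x - P x).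

Lemma orth_proj_exists : exists P, is_orth_proj P.
Proof.
have near x : exists m, N m /\ orth N (x - m).
  by have [m Nm hmin] := min_dist_exists x; exists m; split; last exact: min_dist_orth.
by have [P hP] := choice near; exists P.
Qed.

Section OrthProj.
Variable P : V -> V.
Hypothesis hP : is_orth_proj P.

Lemma orth_proj_uniq x m : N m -> orth N (x - m) -> P x = m.
Proof.
have [_ ND NZ _] := hN; have [NP oP] := hP x.
move=> Nm om; apply/eqP; rewrite -subr_eq0; apply/eqP/ipxx_eq0.
have NPm : N (P x - m) by apply: ND => //; rewrite -scaleN1r; apply: NZ.
have e : P x - m = (x - m) - (x - P x) by rewrite opprB [RHS]addrC addrA subrK.
by rewrite {1}e ipBl om // oP // subrr.
Qed.

Lemma orth_proj_id y : N y -> P y = y.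
Proof. by move=> Ny; apply: orth_proj_uniq => // n _; rewrite subrr ip0l. Qed.

Lemma orth_proj_idem x : P (P x) = P x.
Proof. exact/orth_proj_id/(hP x).1. Qed.

Lemma orth_proj_sa : self_adjoint ip P.
Proof.
move=> x y; have [[NPx oPx] [NPy oPy]] := (hP x, hP y).
have -> : ip (P x) y = ip (P x) (P y) + ip (P x) (y - P y).
  by rewrite -ipDr addrC subrK.
have -> : ip x (P y) = ip (P x) (P y) + ip (x - P x) (P y).
  by rewrite -ipDl addrC subrK.
by rewrite oPx // [ip (P x) (y - _)]ipC oPy // conjC0.
Qed.

Lemma orth_proj_bounded : bounded_op ip P.
Proof.
have [_ ND NZ _] := hN.
apply: (@bounded_op_of_sqnorm _ 1) => [a x y||x].
- have [[NPx oPx] [NPy oPy]] := (hP x, hP y).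
  apply: orth_proj_uniq => [|n Nn]; first by apply: ND => //; apply: NZ.
  by rewrite opprD addrACA -scalerBr ipDZl oPx // oPy // mulr0 addr0.
- exact: ler01.
- have [NPx oPx] := hP x.
  rewrite mul1r -[in leRHS](subrK (P x) x) sqnormD [ip _ (P x)]oPx //.
  by rewrite mulr0 addr0 lerDr sqnorm_ge0.
Qed.

Lemma orth_proj_is_projection : is_projection ip P.
Proof.
split; first exact: orth_proj_bounded.
by split; [exact: orth_proj_idem | exact: orth_proj_sa].
Qed.

Lemma orth_proj_commute T : bounded_op ip T ->
  (forall y, N y -> N (T y)) -> (forall w, orth N w -> orth N (T w)) ->
  forall x, T (P x) = P (T x).
Proof.
move=> hT TN To x; symmetry; apply: orth_proj_uniq; first exact/TN/(hP x).1.
by rewrite -(opB hT); apply/To/(hP x).2.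
Qed.
End OrthProj.

End ClosedSubspace.

Lemma projection_compl P : is_projection ip P -> is_projection ip (fun x => x - P x).
Proof.
case=> hP [Pidem Psa]; split; first exact: bounded_op_sub bounded_op_id hP.
split=> [x|x y] /=; first by rewrite (opB hP) [P (P x)]Pidem subrr subr0.
by rewrite ipBl ipBr Psa.
Qed.

Lemma projection_sqnorm_le P v : is_projection ip P -> sqnorm (P v) <= sqnorm v.
Proof.
case=> hP [Pidem Psa].
have orth_Pv : ip (P v) (v - P v) = 0 by rewrite Psa (opB hP) [P (P v)]Pidem subrr ip0r.
have -> : sqnorm v = sqnorm (P v + (v - P v)) by rewrite addrC subrK.
by rewrite sqnormD orth_Pv mulr0 addr0 lerDl sqnorm_ge0.
Qed.

Lemma ip_eq0_of_approx w n :
  (forall e, 0 < e -> exists2 y, ip w y = 0 & sqnorm (n - y) < e) -> ip w n = 0.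
Proof.
have Re_eq0 u : (forall e, 0 < e -> exists2 y, ip u y = 0 & sqnorm (n - y) < e) ->
    complex.Re (ip u n) = 0.
  move=> approx; apply/eqP; rewrite -sqrf_eq0 eq_le sqr_ge0 andbT.
  apply/ler_addgt0Pr => t t0; rewrite add0r.
  have u1 : 0 < sqnorm u + 1 by have := sqnorm_ge0 u; lra.
  have [y uy hy] := approx _ (divr_gt0 t0 u1).
  have -> : ip u n = ip u (n - y) by rewrite ipBr uy subr0.
  apply: le_trans (Re_ip_sqr_le _ _) _; rewrite ltr_pdivlMr // in hy.
  have := sqnorm_ge0 u; have := sqnorm_ge0 (n - y); nra.
move=> approx; have hre := Re_eq0 _ approx.
have him : complex.Re (ip ('i%C *: w) n) = 0.
  by apply: Re_eq0 => e /approx [y wy hy]; exists y; rewrite ?ipZl ?wy ?mulr0.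
rewrite ipZl in him.
case: (ip w n) hre him => u v /= ->.
by rewrite mul0r mul1r sub0r => /eqP; rewrite oppr_eq0 => /eqP ->.
Qed.

Definition closure_range (d : V -> V) (y : V) :=
  forall e, 0 < e -> exists z, sqnorm (y - d z) < e.

Lemma closure_range_image d T S : bounded_op ip T -> (forall z, T (d z) = d (S z)) ->
  forall y, closure_range d y -> closure_range d (T y).
Proof.
move=> hT Td y hy e e0; have [K K0 hK] := op_sqnorm_le hT.
have K1 : 0 < K + 1 by lra.
have [z hz] := hy _ (divr_gt0 e0 K1); rewrite ltr_pdivlMr // in hz.
exists (S z); rewrite -Td -(opB hT); apply: le_lt_trans (hK _) _.
have := sqnorm_ge0 (y - d z); nra.
Qed.

Lemma closure_range_subspace d : bounded_op ip d -> closed_subspace (closure_range d).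
Proof.
move=> hd; split.
- by move=> e e0; exists 0; rewrite (op0 hd) subrr sqnorm0.
- move=> x y hx hy e e0.
  have e4 : 0 < e / 4 by rewrite divr_gt0.
  have [[z1 h1] [z2 h2]] := (hx _ e4, hy _ e4).
  exists (z1 + z2); rewrite (opD hd) opprD addrACA.
  apply: le_lt_trans (sqnormD_le _ _) _; lra.
- move=> a; apply: (closure_range_image (S := fun z => a *: z)).
    exact: bounded_op_scale bounded_op_id.
  by move=> z; rewrite (opZ hd).
- move=> x hx e e0.
  have e4 : 0 < e / 4 by rewrite divr_gt0.
  have [n /(_ _ e4) [z hz] hn] := hx _ e4.
  exists z; rewrite -[x](subrK n) -addrA.
  apply: le_lt_trans (sqnormD_le _ _) _; lra.
Qed.

Lemma orth_closure_range_adjoint c d w : is_adjoint ip c d ->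
  orth (closure_range d) w <-> c w = 0.
Proof.
move=> cd; split=> [ow | cw0 n hn].
  by apply: ipxx_eq0; rewrite cd; apply: ow => e e0; exists (c w); rewrite subrr sqnorm0.
apply: ip_eq0_of_approx => e /hn [z hz]; exists (d z) => //.
by rewrite -cd cw0 ip0l.
Qed.

(** * Von Neumann algebras and the support projection *)

Section VonNeumann.
Variable A : (V -> V) -> Prop.
Hypothesis HA : von_neumann_algebra ip A.

Lemma vN_bounded a : A a -> bounded_op ip a.
Proof. by case: HA => + _; apply. Qed.

Lemma vN_adjoint a : A a -> exists2 b, A b & is_adjoint ip a b.
Proof. by move=> Aa; case: HA => _ [/(_ a Aa) [b [Ab hab]] _]; exists b. Qed.

Lemma commutant_bounded T : commutant ip A T -> bounded_op ip T.
Proof. by case. Qed.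

Lemma commutant_commute T a : commutant ip A T -> A a -> forall x, T (a x) = a (T x).
Proof. by case=> _ + Aa; apply. Qed.

Lemma vN_of_commute f : bounded_op ip f ->
  (forall T, commutant ip A T -> forall x, T (f x) = f (T x)) -> A f.
Proof.
by move=> hf hc; case: HA => _ [_ /(_ f) [_]]; apply; split => // T /hc.
Qed.

Lemma vN_id : A id.
Proof. by apply: vN_of_commute; first exact: bounded_op_id. Qed.

Lemma vN_comp f g : A f -> A g -> A (fun x => f (g x)).
Proof.
move=> Af Ag; apply: vN_of_commute => [|T hT x].
  exact: bounded_op_comp (vN_bounded Af) (vN_bounded Ag).
by rewrite (commutant_commute hT Af) (commutant_commute hT Ag).
Qed.

Lemma vN_scale (c : C) f : A f -> A (fun x => c *: f x).
Proof.
move=> Af; apply: vN_of_commute => [|T hT x]; first exact/bounded_op_scale/vN_bounded.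
by rewrite (opZ (commutant_bounded hT)) (commutant_commute hT Af).
Qed.

Lemma vN_add f g : A f -> A g -> A (fun x => f x + g x).
Proof.
move=> Af Ag; apply: vN_of_commute => [|T hT x].
  exact: bounded_op_add (vN_bounded Af) (vN_bounded Ag).
rewrite (opD (commutant_bounded hT)).
by rewrite (commutant_commute hT Af) (commutant_commute hT Ag).
Qed.

Lemma vN_sub f g : A f -> A g -> A (fun x => f x - g x).
Proof.
move=> Af Ag; apply: vN_of_commute => [|T hT x].
  exact: bounded_op_sub (vN_bounded Af) (vN_bounded Ag).
rewrite (opB (commutant_bounded hT)).
by rewrite (commutant_commute hT Af) (commutant_commute hT Ag).
Qed.

(* The adjoint pair [c, d] is what replaces the adjoints of commutant elements,
   which need not exist here: it identifies the orthogonal complement of the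
   range of [d] with the kernel of [c]. *)
Lemma vN_orth_proj_compl c d P : A c -> A d -> is_adjoint ip c d ->
  is_orth_proj (closure_range d) P -> A (fun x => x - P x).
Proof.
move=> Ac Ad cd hP.
have hN := closure_range_subspace (vN_bounded Ad).
apply: vN_of_commute => [|T hT x].
  exact: bounded_op_sub bounded_op_id (orth_proj_bounded hN hP).
have hTb := commutant_bounded hT.
rewrite (opB hTb) (orth_proj_commute hN hP hTb) //.
  exact: closure_range_image hTb (commutant_commute hT Ad).
move=> w; rewrite !orth_closure_range_adjoint // -(commutant_commute hT Ac) => ->.
exact: op0.
Qed.

Section Support.
Variables (xi : V) (p : V -> V).
Hypothesis Hsupp : is_support ip A xi p.
Hypothesis Happrox : forall a : V -> V, A a -> self_adjoint ip a ->
  forall e : R, 0 < e -> exists ah : V -> V,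
    commutant ip A ah /\ hnorm ip (a xi - ah xi) < e.

Lemma support_in : A p.
Proof. by case: Hsupp. Qed.

Lemma support_projection : is_projection ip p.
Proof. by case: Hsupp. Qed.

Lemma support_bounded : bounded_op ip p.
Proof. by case: support_projection. Qed.

Lemma support_fixes : p xi = xi.
Proof.
case: Hsupp => _ [_ [pp psa]] /(_ _ vN_id) hid _.
rewrite /omega /= [p (p xi)]pp in hid.
apply/eqP; rewrite eq_sym -subr_eq0; apply/eqP/ipxx_eq0.
by rewrite ipBl !ipBr -[ip xi (p xi)]psa -[ip (p xi) (p xi)]psa [p (p xi)]pp hid !subrr.
Qed.

Lemma support_le Q : A Q -> is_projection ip Q -> Q xi = xi -> proj_le p Q.
Proof.
case: Hsupp => _ _ _ min AQ hQ Qxi; apply: min => // x _.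
by case: hQ => _ [_ Qsa]; rewrite /omega /= Qxi Qsa Qxi.
Qed.

(* [ah xi = ah (p xi) = p (ah xi)] lies in the range of [p], so the distance
   from [h xi] to that range is at most [|h xi - ah xi|]. *)
Lemma support_range_sa h : A h -> self_adjoint ip h -> p (h xi) = h xi.
Proof.
move=> Ah sh; apply/eqP; rewrite eq_sym -subr_eq0; apply/eqP/sqnorm_le0.
apply/ler_addgt0Pr => e e0; rewrite add0r.
have se : 0 < Num.sqrt e by rewrite sqrtr_gt0.
have [ah [cah]] := Happrox Ah sh se; rewrite hnorm_lt_sqrt // => hv.
have pah : p (ah xi) = ah xi.
  by rewrite -(commutant_commute cah support_in) support_fixes.
have -> : h xi - p (h xi) = (h xi - ah xi) - p (h xi - ah xi).
  by rewrite (opB support_bounded) pah opprB addrA subrK.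
apply: le_trans (ltW hv).
exact: projection_sqnorm_le (projection_compl support_projection).
Qed.

Lemma support_range a : A a -> p (a xi) = a xi.
Proof.
move=> Aa; have [b Ab ab] := vN_adjoint Aa.
have ba : is_adjoint ip b a by move=> x y; rewrite ipC -ab -ipC.
pose q x := x - p x.
have hq : bounded_op ip q := bounded_op_sub bounded_op_id support_bounded.
have q_sa h : A h -> self_adjoint ip h -> q (h xi) = 0.
  by move=> Ah sh; rewrite /q support_range_sa // subrr.
have e1 : q (a xi) + q (b xi) = 0.
  rewrite -(opD hq); apply: q_sa (vN_add Aa Ab) _ => x y /=.
  by rewrite ipDl ipDr ab ba addrC.
have e2 : 'i *: (q (a xi) - q (b xi)) = 0.
  rewrite -(opB hq) -(opZ hq); apply: q_sa (vN_scale 'i (vN_sub Aa Ab)) _ => x y /=.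
  by rewrite ipZl ipZr ipBl ipBr ab ba conjCi mulNr -mulrN opprB.
move/eqP: e2; rewrite scaler_eq0 (negbTE (neq0Ci _)) subr_eq0 => /eqP qab.
move/eqP: e1; rewrite -qab -mulr2n -scaler_nat scaler_eq0 pnatr_eq0 /=.
by move=> /eqP /subr0_eq.
Qed.

(* With [P] the projection onto the closed range of [d], [1 - P] competes with
   [p] for the support, which forces [P p = 0]. *)
Lemma support_adjoint_eq0 c d : A c -> A d -> is_adjoint ip c d -> c xi = 0 ->
  (forall z, p (d z) = d z) -> forall z, d z = 0.
Proof.
move=> Ac Ad cd cxi pd z.
have hN := closure_range_subspace (vN_bounded Ad).
have [P hP] := orth_proj_exists hN.
have Pxi : P xi = 0.
  apply: (orth_proj_uniq hN hP); first by case: hN.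
  by rewrite subr0; apply/(orth_closure_range_adjoint _ cd).
have le_pQ : proj_le p (fun x => x - P x).
  apply: support_le; first exact: vN_orth_proj_compl Ac Ad cd hP.
    exact: projection_compl (orth_proj_is_projection hN hP).
  by rewrite Pxi subr0.
have dN : closure_range d (d z) by move=> e e0; exists z; rewrite subrr sqnorm0.
have := le_pQ (d z); rewrite /= pd => /(congr1 (fun v => d z - v)).
by rewrite subKr subrr (orth_proj_id hN hP dN).
Qed.

Lemma support_invariant a : A a -> forall w, p (a (p w)) = a (p w).
Proof.
move=> Aa; have [b Ab ab] := vN_adjoint Aa.
have [_ [pp psa]] := support_projection.
pose c x := a (p x) - p (a (p x)); pose d z := p (b (z - p z)).
have Aap : A (fun x => a (p x)) := vN_comp Aa support_in.
have Ac : A c := vN_sub Aap (vN_comp support_in Aap).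
have Ad : A d := vN_comp support_in (vN_comp Ab (vN_sub vN_id support_in)).
have cd : is_adjoint ip c d by move=> x z; rewrite ipBl psa -ipBr ab psa.
have cxi : c xi = 0 by rewrite /c support_fixes support_range ?subrr.
have d0 := support_adjoint_eq0 Ac Ad cd cxi (fun z => pp _).
move=> w; have cw : c w = 0 by apply: ipxx_eq0; rewrite cd d0 ip0r.
exact/esym/subr0_eq.
Qed.

(* [p a p = a p] for [a] and for its adjoint [b]; taking adjoints in [p b p = b p]
   gives [p a p = p a]. *)
Lemma support_commute a : A a -> forall x, p (a x) = a (p x).
Proof.
move=> Aa x; have [b Ab ab] := vN_adjoint Aa.
have [_ [_ psa]] := support_projection.
have e y : ip (p (a x)) y = ip (a (p x)) y.
  by rewrite psa ab -(support_invariant Ab) -psa -ab -psa (support_invariant Aa).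
by apply/eqP; rewrite -subr_eq0; apply/eqP/ipxx_eq0; rewrite ipBl e subrr.
Qed.
End Support.
End VonNeumann.

End Hilbert.

Theorem mainTheorem6 (R : realType) (V : lmodType R[i]) (ip : V -> V -> R[i])
  (HH : is_hilbert ip) (A : (V -> V) -> Prop) (HA : von_neumann_algebra ip A)
  (xi : V) (epsA : V -> V) (Hsupp : is_support ip A xi epsA)
  (Happrox : forall a : V -> V, A a -> self_adjoint ip a ->
     forall e : R, 0 < e -> exists ah : V -> V,
       commutant ip A ah /\ hnorm ip (a xi - ah xi) < e) :
  forall a : V -> V, A a -> forall x : V, epsA (a x) = a (epsA x).
Proof. exact: (support_commute HH HA Hsupp Happrox). Qed.
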